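(* Let $F=(f_1,\dots,f_s)\in K[\mathbf{X}]^s$, $I=\langle F\rangle$, $\mathbf{r}\in\mathbb{Q}^n$ and $\le_m$ a monomial order. Let $(h_1,\dots,h_k)$ be a finite Gröbner basis of the ideal $\langle F^h\rangle_{(\mathbf{r},0)}\subseteq K\{\mathbf{X},t;(\mathbf{r},0)\}$ with respect to $<_{(\mathbf{r},0),m}$, consisting of homogeneous polynomials belonging to $\langle F^h\rangle$. Then $(h_{1,*},\dots,h_{k,*})$ is an $\mathbf{r}$-local Gröbner basis of $I$ with respect to $<_{\mathbf{r},m}$.
   Context: $K$ is a field complete for a discrete valuation $\mathrm{val}$. For $\mathbf{r}\in\mathbb{Q}^n$, $K\{\mathbf{X};\mathbf{r}\}$ is the Tate algebra of series $\sum a_\alpha\mathbf{X}^\alpha$ with $\mathrm{val}(a_\alpha)-\mathbf{r}\cdot\alpha\to+\infty$; $\mathrm{val}_{\mathbf{r}}(a\mathbf{X}^\alpha)=\mathrm{val}(a)-\mathbf{r}\cdot\alpha$. The order $<_{\mathbf{r},m}$ on terms: $a\mathbf{X}^\alpha<_{\mathbf{r},m}b\mathbf{X}^\beta$ iff $\mathrm{val}_{\mathbf{r}}(a\mathbf{X}^\alpha)>\mathrm{val}_{\mathbf{r}}(b\mathbf{X}^\beta)$, or equal and $\mathbf{X}^\alpha<_m\mathbf{X}^\beta$; $\mathrm{LT}$ denotes the maximal term. For an ideal $J$ of a polynomial ring, $J_{\mathbf{r}}$ is the ideal it generates in the Tate algebra. A Gröbner basis of an ideal $J$ of a Tate algebra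 is a subset $G\subseteq J$ such that each nonzero element of $J$ has leading term divisible by the leading term of some element of $G$; an $\mathbf{r}$-local Gröbner basis of a polynomial ideal $I$ is a Gröbner basis of $I_{\mathbf{r}}$ consisting of polynomials of $I$. Homogenization: for $f\in K[\mathbf{X}]$, $f^*=t^{\deg f}f(\mathbf{X}/t)\in K[\mathbf{X},t]$; dehomogenization: $h_*=h(\mathbf{X},1)$. $F^h=(f_1^*,\dots,f_s^* )$ and $\langle F^h\rangle$ is the ideal of $K[\mathbf{X},t]$ it generates. $K\{\mathbf{X},t;(\mathbf{r},0)\}$ is the Tate algebra in $n+1$ variables with log-radius $0$ for $t$, and $\mathrm{val}_{(\mathbf{r},0)}(a\mathbf{X}^\alpha t^u)=\mathrm{val}_{\mathbf{r}}(a\mathbf{X}^\alpha)$. The order $<_{(\mathbf{r},0),m}$: $a\mathbf{X}^\alpha t^u<b\mathbf{X}^\beta t^v$ iff $\mathrm{val}_{\mathbf{r}}(a\mathbf{X}^\alpha)>\mathrm{val}_{\mathbf{r}}(b\mathbf{X}^\beta)$; or these are equal and $|\alpha|+u<|\beta|+v$; or both are equal and $\mathbf{X}^\alpha<_m\mathbf{X}^\beta$. *)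

From HB Require Import structures.
From mathcomp Require Import all_boot all_order all_algebra.
From mathcomp Require Import mpoly.
Set Implicit Arguments. Unset Strict Implicit. Unset Printing Implicit Defensive.
Import Order.TTheory GRing.Theory Num.Theory.
Local Open Scope ring_scope.

(** * Complete discretely valued fields.
    The valuation is [v : K -> int]; the value at [0] (which is +oo on paper)
    is irrelevant: every axiom only uses [v] at nonzero elements. *)
Definition is_discrete_valuation (K : fieldType) (v : K -> int) : Prop :=
  [/\ (forall x y : K, x != 0 -> y != 0 -> v (x * y) = v x + v y),
      (forall x y : K, x != 0 -> y != 0 -> x + y != 0 ->
           Num.min (v x) (v y) <= v (x + y)) &
      (exists x : K, x != 0 /\ v x != 0)].

(** "val (x - y) >= M" with the convention val 0 = +oo *)
Definition vclose (K : fieldType) (v : K -> int) (x y : K) (M : int) : Prop :=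
  x = y \/ M <= v (x - y).

Definition is_complete_dvf (K : fieldType) (v : K -> int) : Prop :=
  is_discrete_valuation v /\
  forall u : nat -> K,
    (forall M : int, exists N, forall p q, (N <= p)%N -> (N <= q)%N ->
        vclose v (u p) (u q) M) ->
    exists l : K, forall M : int, exists N, forall p, (N <= p)%N -> vclose v (u p) l M.

Definition monomial_order (n : nat) (le : rel 'X_{1..n}) : Prop :=
  (forall a, le a a) /\
  [/\ (forall a b, le a b -> le b a -> a = b),
      (forall a b c, le a b -> le b c -> le a c),
      (forall a b, le a b \/ le b a),
      (forall a, le 0%MM a) &
      (forall a b c, le a b -> le (a + c)%MM (b + c)%MM)].

Definition series (K : fieldType) (n : nat) := 'X_{1..n} -> K.

Definition ser_of (K : fieldType) (n : nat) (p : {mpoly K[n]}) : series K n :=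
  fun a => p@_a.

Definition valr (K : fieldType) (v : K -> int) (n : nat) (r : 'I_n -> rat)
    (c : K) (a : 'X_{1..n}) : rat :=
  (v c)%:~R - \sum_(i < n) r i * (a i)%:R.

(** f is in K{X; r}: val(a_alpha) - r.alpha -> +oo *)
Definition in_tate (K : fieldType) (v : K -> int) (n : nat) (r : 'I_n -> rat)
    (f : series K n) : Prop :=
  forall M : rat, exists S : seq 'X_{1..n},
    forall a, f a != 0 -> a \notin S -> M < valr v r (f a) a.

Definition mul_ser_poly (K : fieldType) (n : nat) (f : series K n)
    (p : {mpoly K[n]}) : series K n :=
  fun a => \sum_(b <- msupp p | lem b a) p@_b * f (a - b)%MM.

Definition poly_ideal (K : fieldType) (n s : nat) (F : 'I_s -> {mpoly K[n]})
    (p : {mpoly K[n]}) : Prop :=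
  exists q : 'I_s -> {mpoly K[n]}, p = \sum_(i < s) q i * F i.

Definition tate_ideal (K : fieldType) (v : K -> int) (n : nat) (r : 'I_n -> rat)
    (J : {mpoly K[n]} -> Prop) (g : series K n) : Prop :=
  exists (k : nat) (c : 'I_k -> series K n) (p : 'I_k -> {mpoly K[n]}),
    [/\ forall i, in_tate v r (c i), forall i, J (p i) &
        g = fun a => \sum_(i < k) mul_ser_poly (c i) (p i) a].

(** * Term orders and leading terms.  A term order is given by its strict
    comparison [tlt c a d b] meaning c X^a < d X^b (c, d nonzero). *)
Definition term_rel (K : fieldType) (n : nat) := K -> 'X_{1..n} -> K -> 'X_{1..n} -> Prop.

Definition tlt_rm (K : fieldType) (v : K -> int) (n : nat) (r : 'I_n -> rat)
    (le : rel 'X_{1..n}) : term_rel K n :=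
  fun c a d b =>
    valr v r d b < valr v r c a \/
    (valr v r c a = valr v r d b /\ le a b /\ a <> b).

Definition mproj (n : nat) (a : 'X_{1..n.+1}) : 'X_{1..n} :=
  [multinom a (lift ord_max i) | i < n].

Definition r0 (n : nat) (r : 'I_n -> rat) : 'I_n.+1 -> rat :=
  fun i => oapp r 0 (unlift ord_max i).

Definition tlt_r0m (K : fieldType) (v : K -> int) (n : nat) (r : 'I_n -> rat)
    (le : rel 'X_{1..n}) : term_rel K n.+1 :=
  fun c a d b =>
    valr v (r0 r) d b < valr v (r0 r) c a \/
    (valr v (r0 r) c a = valr v (r0 r) d b /\ (mdeg a < mdeg b)%N) \/
    (valr v (r0 r) c a = valr v (r0 r) d b /\ mdeg a = mdeg b /\
       le (mproj a) (mproj b) /\ mproj a <> mproj b).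

Definition is_LM (K : fieldType) (n : nat) (tlt : term_rel K n) (f : series K n)
    (a : 'X_{1..n}) : Prop :=
  f a != 0 /\ forall b, f b != 0 -> b <> a -> tlt (f b) b (f a) a.

(** Groebner basis (family G) of an ideal J of a Tate algebra;
    divisibility of terms c X^b | d X^a over a field is lem b a. *)
Definition tate_GB (K : fieldType) (n : nat) (tlt : term_rel K n)
    (J : series K n -> Prop) (k : nat) (G : 'I_k -> series K n) : Prop :=
  (forall i, J (G i)) /\
  forall f, J f -> f <> (fun _ => 0) ->
    exists i a b, [/\ is_LM tlt f a, is_LM tlt (G i) b & lem b a].

Definition r_local_GB (K : fieldType) (v : K -> int) (n : nat) (r : 'I_n -> rat)
    (le : rel 'X_{1..n}) (I : {mpoly K[n]} -> Prop) (k : nat)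
    (G : 'I_k -> {mpoly K[n]}) : Prop :=
  (forall i, I (G i)) /\
  tate_GB (tlt_rm v r le) (tate_ideal v r I) (fun i => ser_of (G i)).

(** * Homogenization and dehomogenization (t is the last variable). *)
Definition hmon (n : nat) (a : 'X_{1..n}) (u : nat) : 'X_{1..n.+1} :=
  [multinom oapp (fun j => a j) u (unlift ord_max i) | i < n.+1].

Definition homogenize (K : fieldType) (n : nat) (f : {mpoly K[n]}) : {mpoly K[n.+1]} :=
  \sum_(a <- msupp f) f@_a *: 'X_[hmon a ((msize f).-1 - mdeg a)].

Definition dehomogenize (K : fieldType) (n : nat) (h : {mpoly K[n.+1]}) : {mpoly K[n]} :=
  h \mPo [tuple oapp (fun j => 'X_j) 1 (unlift ord_max i) | i < n.+1].

(* Let f <> 0 be in I_r and let a1 be one of its terms.  Truncating the Tate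
   coefficients of a representation of f gives p in I such that f - p only has
   terms of val_r larger than that of a1, so f and p have the same leading term.
   Homogenizing a representation of p gives a homogeneous H in <F^h> with
   H_* = p.  For terms of equal total degree, <_{(r,0),m} compares as <_{r,m}
   on the dehomogenized exponents, so LT(H)_* = LT(p) = LT(f), and likewise
   LT(h_i)_* = LT(h_{i,*}).  The Groebner basis property gives LT(h_i) | LT(H),
   and dehomogenizing this divisibility gives LT(h_{i,*}) | LT(f). *)

From HB Require Import structures.
From mathcomp Require Import all_boot all_order all_algebra.
From mathcomp Require Import mpoly.
From Stdlib Require Import FunctionalExtensionality Classical.
From mathcomp Require Import zify ring.
Set Implicit Arguments.
Unset Strict Implicit.
Unset Printing Implicit Defensive.

Import Order.TTheory GRing.Theory Num.Theory.
Local Open Scope ring_scope.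

Section DiscreteValuation.
Variables (K : fieldType) (v : K -> int).
Hypothesis Hv : is_discrete_valuation v.

Lemma dvalM x y : x != 0 -> y != 0 -> v (x * y) = v x + v y.
Proof. by case: Hv => H _ _; apply: H. Qed.

Lemma dvalD_min x y : x != 0 -> y != 0 -> x + y != 0 ->
  Num.min (v x) (v y) <= v (x + y).
Proof. by case: Hv => _ H _; apply: H. Qed.

Lemma dval1 : v 1 = 0.
Proof.
by have := dvalM (oner_neq0 K) (oner_neq0 K); rewrite mulr1 -{1}[v 1]addr0 => /addrI.
Qed.

Lemma dvalN x : v (- x) = v x.
Proof.
have vN1 : v (-1) = 0.
  have N1_neq0 : (-1 : K) != 0 by rewrite oppr_eq0 oner_neq0.
  by have := dvalM N1_neq0 N1_neq0; rewrite mulrNN mulr1 dval1; lia.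
have [->|x_neq0] := eqVneq x 0; first by rewrite oppr0.
by rewrite -mulN1r dvalM ?oppr_eq0 ?oner_neq0 // vN1 add0r.
Qed.

Lemma dvalD_eq x y : x != 0 -> (y != 0 -> v x < v y) ->
  x + y != 0 /\ v (x + y) = v x.
Proof.
move=> x_neq0; have [->|y_neq0 /(_ isT) lt_xy] := eqVneq y 0; first by rewrite addr0.
have xy_neq0 : x + y != 0.
  by rewrite addr_eq0; apply: contraTneq lt_xy => ->; rewrite dvalN ltxx.
split => //; apply/eqP; rewrite eq_le; apply/andP; split.
  have Ny_neq0 : - y != 0 by rewrite oppr_eq0.
  have := dvalD_min xy_neq0 Ny_neq0; rewrite addrK => /(_ x_neq0).
  by rewrite ge_min dvalN (leNgt (v y)) lt_xy orbF.
have := dvalD_min x_neq0 y_neq0 xy_neq0.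
by rewrite ge_min => /orP[] // /(lt_le_trans lt_xy)/ltW.
Qed.

Variables (n : nat) (r : 'I_n -> rat).
Local Notation valr := (valr v r).

Lemma ltr_valr x y a : (valr x a < valr y a) = (v x < v y).
Proof. by rewrite /valr ltrD2r ltr_int. Qed.

Lemma ler_valr x y a : (valr x a <= valr y a) = (v x <= v y).
Proof. by rewrite /valr lerD2r ler_int. Qed.

Lemma valrM x y a b : x != 0 -> y != 0 ->
  valr (x * y) (a + b)%MM = valr x a + valr y b.
Proof.
move=> x_neq0 y_neq0; rewrite /valr dvalM // intrD.
under eq_bigr do rewrite mnmDE natrD mulrDr.
by rewrite big_split /=; ring.
Qed.

Lemma valr_sum_gt (M : rat) a (I : Type) (s : seq I) (P : pred I) (F : I -> K) :
  (forall i, P i -> F i != 0 -> M < valr (F i) a) ->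
  \sum_(i <- s | P i) F i != 0 -> M < valr (\sum_(i <- s | P i) F i) a.
Proof.
move=> HF; apply: (big_ind (fun x => x != 0 -> M < valr x a)) => [|x y Hx Hy|]; last exact: HF.
  by rewrite eqxx.
have [->|x_neq0] := eqVneq x 0; first by rewrite add0r.
have [->|y_neq0] := eqVneq y 0; first by rewrite addr0.
move=> xy_neq0; have := dvalD_min x_neq0 y_neq0 xy_neq0.
rewrite ge_min -!(ler_valr _ _ a) => /orP[]; apply: lt_le_trans; [exact: Hx|exact: Hy].
Qed.

End DiscreteValuation.

Lemma exists_seq_max (T : eqType) (R : T -> T -> Prop) (s : seq T) x0 :
  (forall x y z, R x y -> R y z -> R x z) ->
  (forall x y, x <> y -> R x y \/ R y x) ->
  x0 \in s -> exists2 m, m \in s & forall x, x \in s -> x <> m -> R x m.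
Proof.
move=> R_trans R_total; elim: s x0 => // y s IH x0 _.
case: s IH => [_|z s IH].
  by exists y => [|x]; rewrite ?mem_head // inE => /eqP.
have [m ms max_m] := IH z (mem_head _ _).
have [->|ym] := eqVneq y m.
  by exists m => [|x]; rewrite in_cons ?eqxx // => /orP[/eqP //|/max_m].
have [lt_ym|lt_my] := R_total y m (elimN eqP ym).
  exists m => [|x]; first by rewrite in_cons ms orbT.
  by rewrite in_cons => /orP[/eqP -> _|/max_m].
exists y => [|x]; first exact: mem_head.
rewrite in_cons => /orP[/eqP //|xs xy].
have [->|xm] := eqVneq x m; first exact: lt_my.
exact: R_trans (max_m x xs (elimN eqP xm)) lt_my.
Qed.

Section TermOrder.
Variables (K : fieldType) (v : K -> int) (n : nat) (r : 'I_n -> rat)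
  (le : rel 'X_{1..n}).
Hypothesis Hle : monomial_order le.
Local Notation tlt := (tlt_rm v r le).

Lemma tlt_irr c a : ~ tlt c a c a.
Proof. by case=> [|[_ [_ //]]]; rewrite ltxx. Qed.

Lemma tlt_trans c1 a1 c2 a2 c3 a3 :
  tlt c1 a1 c2 a2 -> tlt c2 a2 c3 a3 -> tlt c1 a1 c3 a3.
Proof.
case: Hle => _ [le_anti le_trans _ _ _].
case=> [lt12|[e12 [le12 ne12]]] [lt23|[e23 [le23 ne23]]].
- by left; exact: lt_trans lt23 lt12.
- by left; rewrite -e23.
- by left; rewrite e12.
- right; split; first by rewrite e12.
  split; first exact: le_trans le12 le23.
  by move=> e13; subst a3; apply: ne23; apply: le_anti.
Qed.

Lemma tlt_total c1 a1 c2 a2 : a1 <> a2 -> tlt c1 a1 c2 a2 \/ tlt c2 a2 c1 a1.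
Proof.
case: Hle => _ [_ _ le_total _ _] ne12.
case: (ltgtP (valr v r c1 a1) (valr v r c2 a2)) => [lt12|lt21|e12].
- by right; left.
- by left; left.
- case: (le_total a1 a2) => [le12|le21]; [left|right]; right; first by [].
  by split; [|split=> // /esym].
Qed.

Lemma tlt_dval c1 a1 c2 a2 c1' c2' : v c1 = v c1' -> v c2 = v c2' ->
  tlt c1 a1 c2 a2 -> tlt c1' a1 c2' a2.
Proof. by rewrite /tlt_rm /valr => -> ->. Qed.

Lemma tlt_valr_le c1 a1 c2 a2 : tlt c1 a1 c2 a2 -> valr v r c2 a2 <= valr v r c1 a1.
Proof. by case=> [/ltW //|[-> _]]. Qed.

Lemma is_LM_unique (f : series K n) a b : is_LM tlt f a -> is_LM tlt f b -> a = b.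
Proof.
move=> [fa max_a] [fb max_b]; have [//|/eqP ab] := eqVneq a b.
by case: (@tlt_irr (f a) a); apply: tlt_trans (max_b a fa ab) (max_a b fb (nesym ab)).
Qed.

Lemma exists_LM_mpoly (p : {mpoly K[n]}) : p != 0 -> exists a, is_LM tlt (ser_of p) a.
Proof.
move=> p_neq0; have [a0 a0p] : exists a0, a0 \in msupp p.
  case: (msupp p) (msupp_eq0 p) => [|a0 s _]; last by exists a0; rewrite mem_head.
  by rewrite eqxx (negPf p_neq0).
have [a ap max_a] := @exists_seq_max _ (fun b a => tlt p@_b b p@_a a) _ _
  (fun x y z => @tlt_trans _ x _ y _ z) (fun x y => @tlt_total _ x _ y) a0p.
exists a; split; first by rewrite -mcoeff_msupp.
by move=> b; rewrite /ser_of -mcoeff_msupp; exact: max_a.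
Qed.

End TermOrder.

Section SeriesTimesPolynomial.
Variables (K : fieldType) (n : nat).
Implicit Types (p q : {mpoly K[n]}) (c e : series K n).

Lemma ser_of_eq0 p : ser_of p = (fun _ => 0) -> p = 0.
Proof. by move=> p0; apply/mpolyP => a; rewrite mcoeff0 -[p@__]/(ser_of p a) p0. Qed.

Lemma mcoeffMX_lem p (a b : 'X_{1..n}) :
  (p * 'X_[b])@_a = if lem b a then p@_(a - b) else 0.
Proof.
case: ifP => [ba|nba]; first by rewrite -{1}(submK ba) addmC mcoeffMX.
apply/eqP; rewrite mcoeff_eq0 (perm_mem (msuppMX p b)).
by apply/mapP => -[a' _ ea]; move: nba; rewrite ea lem_addr.
Qed.

Lemma mul_ser_polyE p q : mul_ser_poly (ser_of p) q = ser_of (p * q).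
Proof.
apply: functional_extensionality => a.
rewrite /ser_of /mul_ser_poly [in RHS](mpolyE q) mulr_sumr raddf_sum /= big_mkcond /=.
apply: eq_bigr => b _.
by rewrite -scalerAr mcoeffZ mcoeffMX_lem; case: ifP; rewrite ?mulr0.
Qed.

Lemma mul_ser_polyB c e q a :
  mul_ser_poly (fun x => c x - e x) q a = mul_ser_poly c q a - mul_ser_poly e q a.
Proof. by rewrite /mul_ser_poly -sumrB; apply: eq_bigr => b _; rewrite mulrBr. Qed.

Lemma in_tate_ser (v : K -> int) (r : 'I_n -> rat) p : in_tate v r (ser_of p).
Proof. by move=> M; exists (msupp p) => a; rewrite /ser_of -mcoeff_msupp => ->. Qed.

Lemma tate_ideal_ser (v : K -> int) (r : 'I_n -> rat) (J : {mpoly K[n]} -> Prop) p :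
  J p -> tate_ideal v r J (ser_of p).
Proof.
move=> Jp; exists 1%N, (fun _ => ser_of 1), (fun _ => p); split => //.
  by move=> _; exact: in_tate_ser.
by apply: functional_extensionality => a; rewrite big_ord1 mul_ser_polyE mul1r.
Qed.

Variables (s : nat) (F : 'I_s -> {mpoly K[n]}).

Lemma poly_ideal_sum (I : Type) (t : seq I) (P : pred I) (G : I -> {mpoly K[n]}) :
  (forall i, P i -> poly_ideal F (G i)) -> poly_ideal F (\sum_(i <- t | P i) G i).
Proof.
move=> IG; apply: big_ind => //.
- by exists (fun _ => 0); rewrite big1 // => i _; rewrite mul0r.
- move=> _ _ [x ->] [y ->]; exists (fun i => x i + y i).
  by rewrite -big_split; apply: eq_bigr => i _; rewrite mulrDl.
Qed.

Lemma poly_idealMl p q : poly_ideal F q -> poly_ideal F (p * q).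
Proof.
move=> [x ->]; exists (fun i => p * x i).
by rewrite mulr_sumr; apply: eq_bigr => i _; rewrite mulrA.
Qed.

End SeriesTimesPolynomial.

Lemma exists_seq_lbound (R : realDomainType) (T : eqType) (s : seq T) (g : T -> R) :
  exists L, forall x, x \in s -> L <= g x.
Proof.
elim: s => [|x s [L HL]]; first by exists 0.
exists (Num.min (g x) L) => y; rewrite in_cons => /orP[/eqP ->|ys].
  by rewrite ge_min lexx.
by rewrite ge_min HL ?orbT.
Qed.

Section TateApproximation.
Variables (K : fieldType) (v : K -> int) (n : nat) (r : 'I_n -> rat).
Hypothesis Hv : is_discrete_valuation v.

Definition ser_small (M : rat) (e : series K n) : Prop :=
  forall a, e a != 0 -> M < valr v r (e a) a.

Lemma ser_small_subC M (f g : series K n) :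
  ser_small M (fun a => f a - g a) -> ser_small M (fun a => g a - f a).
Proof. by move=> small a; rewrite -opprB oppr_eq0 /valr dvalN //; exact: small. Qed.

Lemma ser_small_sum M k (e : 'I_k -> series K n) :
  (forall i, ser_small M (e i)) -> ser_small M (fun a => \sum_(i < k) e i a).
Proof. by move=> small a; apply: valr_sum_gt => // i _; exact: small. Qed.

Lemma ser_small_mul M L (e : series K n) (q : {mpoly K[n]}) :
  ser_small M e -> (forall b, b \in msupp q -> L <= valr v r q@_b b) ->
  ser_small (L + M) (mul_ser_poly e q).
Proof.
move=> small_e Lq a; rewrite /mul_ser_poly big_seq_cond.
apply: valr_sum_gt => // b /andP[bq ba].
have [->|e_neq0] := eqVneq (e (a - b)%MM) 0; first by rewrite mulr0 eqxx.
have qb_neq0 : q@_b != 0 by rewrite -mcoeff_msupp.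
by move=> _; rewrite -{2}(submK ba) addmC valrM // ler_ltD ?Lq ?small_e.
Qed.

Lemma in_tate_truncate M (c : series K n) : in_tate v r c ->
  exists p : {mpoly K[n]}, ser_small M (fun a => c a - ser_of p a).
Proof.
move=> /(_ M)[S small_c]; exists (\sum_(x <- undup S) c x *: 'X_[x]) => a.
rewrite /ser_of raddf_sum /=.
have [aS|aS] := boolP (a \in S).
  rewrite (bigD1_seq a) ?mem_undup ?undup_uniq //= mcoeffZ mcoeffX eqxx mulr1.
  rewrite big1 ?addr0 ?subrr ?eqxx // => x /negPf xa.
  by rewrite mcoeffZ mcoeffX xa mulr0.
rewrite big1_seq => [|x /andP[_]]; first by rewrite subr0 => ca; exact: small_c.
rewrite mem_undup mcoeffZ mcoeffX.
by case: eqP => [->|_]; [rewrite (negPf aS)|rewrite mulr0].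
Qed.

Lemma tate_ideal_approx s (F : 'I_s -> {mpoly K[n]}) (f : series K n) M :
  tate_ideal v r (poly_ideal F) f ->
  exists p, poly_ideal F p /\ ser_small M (fun a => f a - ser_of p a).
Proof.
move=> [k [c [P [tate_c IP ->]]]].
have trunc i : exists T : {mpoly K[n]},
    ser_small M (mul_ser_poly (fun a => c i a - ser_of T a) (P i)).
  have [L HL] := exists_seq_lbound (msupp (P i)) (fun b => valr v r (P i)@_b b).
  have [T small_T] := in_tate_truncate (M - L) (tate_c i).
  by exists T; have := ser_small_mul small_T HL; rewrite addrC subrK.
have [T small_T] := fin_all_exists trunc.
exists (\sum_i T i * P i); split.
  by apply: poly_ideal_sum => i _; exact: poly_idealMl.
have -> : (fun a => \sum_i mul_ser_poly (c i) (P i) a - ser_of (\sum_i T i * P i) a) =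
    (fun a => \sum_i mul_ser_poly (fun x => c i x - ser_of (T i) x) (P i) a).
  apply: functional_extensionality => a; rewrite /ser_of raddf_sum /= -sumrB.
  by apply: eq_bigr => i _; rewrite mul_ser_polyB mul_ser_polyE.
exact: ser_small_sum.
Qed.

Lemma ser_small_dval M (f g : series K n) a :
  ser_small M (fun x => g x - f x) -> f a != 0 -> valr v r (f a) a <= M ->
  g a != 0 /\ v (g a) = v (f a).
Proof.
move=> small fa le_M; rewrite -[g a](subrK (f a)) addrC.
apply: dvalD_eq => // /small lt_M.
by rewrite -(ltr_valr v r _ _ a); exact: le_lt_trans le_M lt_M.
Qed.

Lemma is_LM_close (le : rel 'X_{1..n}) M (f g : series K n) a0 a1 :
  ser_small M (fun x => f x - g x) -> f a1 != 0 -> valr v r (f a1) a1 <= M ->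
  is_LM (tlt_rm v r le) g a0 -> is_LM (tlt_rm v r le) f a0.
Proof.
move=> small_fg fa1 le_a1 [ga0 max_a0].
have small_gf := ser_small_subC small_fg.
have [ga1 vga1] := ser_small_dval small_gf fa1 le_a1.
have le_a0 : valr v r (g a0) a0 <= M.
  have val_a1 : valr v r (g a1) a1 = valr v r (f a1) a1 by rewrite /valr vga1.
  have [<-|a10] := eqVneq a1 a0; first by rewrite val_a1.
  by rewrite (le_trans (tlt_valr_le (max_a0 a1 ga1 (elimN eqP a10)))) ?val_a1.
have [fa0 vfa0] := ser_small_dval small_fg ga0 le_a0.
split => // b fb ba0.
have [le_b|lt_b] := lerP (valr v r (f b) b) M.
  have [gb vgb] := ser_small_dval small_gf fb le_b.
  exact: tlt_dval vgb (esym vfa0) (max_a0 b gb ba0).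
by left; apply: le_lt_trans lt_b; move: le_a0; rewrite /valr vfa0.
Qed.

End TateApproximation.

Lemma big_ord_recr_lift (R : Type) (idx : R) (op : Monoid.law idx) n (G : 'I_n.+1 -> R) :
  \big[op/idx]_(i < n.+1) G i = op (\big[op/idx]_(j < n) G (lift ord_max j)) (G ord_max).
Proof.
rewrite big_ord_recr; congr (op _ _); apply: eq_bigr => j _.
by congr G; apply: val_inj; rewrite /= /bump leqNgt ltn_ord.
Qed.

Section Homogenization.
Variable n : nat.
Implicit Types (a : 'X_{1..n}) (A B : 'X_{1..n.+1}).

Lemma hmon_lift a u j : hmon a u (lift ord_max j) = a j.
Proof. by rewrite /hmon mnmE liftK. Qed.

Lemma hmon_max a u : hmon a u ord_max = u.
Proof. by rewrite /hmon mnmE unlift_none. Qed.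

Lemma mproj_hmon a u : mproj (hmon a u) = a.
Proof. by apply/mnmP => j; rewrite /mproj mnmE hmon_lift. Qed.

Lemma hmon_mproj B : hmon (mproj B) (B ord_max) = B.
Proof.
by apply/mnmP => i; rewrite /hmon mnmE; case: unliftP => [j ->|->] //=; rewrite mnmE.
Qed.

Lemma mdeg_hmon a u : mdeg (hmon a u) = (mdeg a + u)%N.
Proof.
rewrite !mdegE big_ord_recr_lift hmon_max.
by congr (_ + _)%N; apply: eq_bigr => j _; rewrite hmon_lift.
Qed.

Lemma mdeg_mproj B : mdeg B = (mdeg (mproj B) + B ord_max)%N.
Proof. by rewrite -{1}(hmon_mproj B) mdeg_hmon. Qed.

Lemma lem_mproj A B : lem B A -> lem (mproj B) (mproj A).
Proof. by move/mnm_lepP => le_BA; apply/mnm_lepP => j; rewrite !mnmE. Qed.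

Lemma valr_r0 (K : fieldType) (v : K -> int) (r : 'I_n -> rat) c B :
  valr v (r0 r) c B = valr v r c (mproj B).
Proof.
rewrite /valr big_ord_recr_lift /r0 unlift_none /= mul0r addr0.
by congr (_ - _); apply: eq_bigr => j _; rewrite liftK /= mnmE.
Qed.

Lemma tlt_r0m_mdeg (K : fieldType) (v : K -> int) (r : 'I_n -> rat) (le : rel 'X_{1..n})
    c1 A c2 B :
  mdeg A = mdeg B -> tlt_r0m v r le c1 A c2 B -> tlt_rm v r le c1 (mproj A) c2 (mproj B).
Proof.
rewrite /tlt_r0m /tlt_rm !valr_r0 => eAB.
by case=> [lt|[[_]|[e [_ le_ne]]]]; [left| rewrite eAB ltnn | right].
Qed.

Variable K : fieldType.
Implicit Types (p q : {mpoly K[n]}) (h H : {mpoly K[n.+1]}).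

Lemma dehomogenizeM h H : dehomogenize (h * H) = dehomogenize h * dehomogenize H.
Proof. exact: rmorphM. Qed.

Lemma dehomogenize_sum (I : Type) (t : seq I) (G : I -> {mpoly K[n.+1]}) :
  dehomogenize (\sum_(i <- t) G i) = \sum_(i <- t) dehomogenize (G i).
Proof. exact: raddf_sum. Qed.

Lemma dehomogenizeX B : dehomogenize ('X_[B] : {mpoly K[n.+1]}) = 'X_[mproj B].
Proof.
rewrite /dehomogenize comp_mpolyX big_ord_recr_lift tnth_mktuple unlift_none /=.
rewrite expr1n mulr1 [RHS]mpolyXE_id; apply: eq_bigr => j _.
by rewrite tnth_mktuple liftK /= mnmE.
Qed.

Lemma msupp_homog_hmon h d B : h \is d.-homog -> B \in msupp h ->
  mdeg B = d /\ hmon (mproj B) (d - mdeg (mproj B)) = B.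
Proof.
move=> hom_h Bh; have dB : mdeg B = d := dhomog_mf hom_h Bh.
by split => //; rewrite -[RHS]hmon_mproj -dB mdeg_mproj addKn.
Qed.

Lemma mcoeff_dehomogenize h d a : h \is d.-homog ->
  (dehomogenize h)@_a = h@_(hmon a (d - mdeg a)).
Proof.
move=> hom_h; rewrite /dehomogenize comp_mpolyEX raddf_sum /=.
rewrite [in RHS](mpolyE h) raddf_sum /=; apply: eq_big_seq => B Bh.
rewrite -/(dehomogenize _) dehomogenizeX !mcoeffZ !mcoeffX; congr (_ * (nat_of_bool _)%:R).
have [_ hmon_B] := msupp_homog_hmon hom_h Bh.
by apply/eqP/eqP => [<-|->]; rewrite ?hmon_B ?mproj_hmon.
Qed.

Definition homogenize_at d p : {mpoly K[n.+1]} :=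
  \sum_(a <- msupp p) p@_a *: 'X_[hmon a (d - mdeg a)].

Lemma homogenizeE p : homogenize p = homogenize_at (msize p).-1 p.
Proof. by []. Qed.

Lemma homogenize_at_homog d p : (msize p <= d.+1)%N -> homogenize_at d p \is d.-homog.
Proof.
move=> size_p; rewrite /homogenize_at big_seq; apply: rpred_sum => a ap.
apply: rpredZ; rewrite dhomogX /= mdeg_hmon subnKC //.
by rewrite -ltnS (leq_trans (msize_mdeg_lt ap)).
Qed.

Lemma homogenize_atK d p : dehomogenize (homogenize_at d p) = p.
Proof.
rewrite dehomogenize_sum [RHS]mpolyE; apply: eq_bigr => a _.
by rewrite /dehomogenize comp_mpolyZ -/(dehomogenize _) dehomogenizeX mproj_hmon.
Qed.

End Homogenization.

Section HomogenizedIdeal.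
Variables (K : fieldType) (n s : nat) (F : 'I_s -> {mpoly K[n]}).
Local Notation Fh := (fun j => homogenize (F j)).

Lemma dehomogenize_poly_ideal h : poly_ideal Fh h -> poly_ideal F (dehomogenize h).
Proof.
move=> [Q ->]; exists (fun j => dehomogenize (Q j)); rewrite dehomogenize_sum.
by apply: eq_bigr => j _; rewrite dehomogenizeM homogenizeE homogenize_atK.
Qed.

Lemma poly_ideal_homog_lift p : poly_ideal F p ->
  exists D H, [/\ poly_ideal Fh H, H \is D.-homog & dehomogenize H = p].
Proof.
move=> [q ->]; pose D := (\sum_(j < s) (msize (q j) + msize (F j)))%N.
have le_D j : (msize (q j) + msize (F j) <= D)%N by rewrite /D (bigD1 j) //= leq_addr.
pose Q j := homogenize_at (D - (msize (F j)).-1) (q j).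
exists D, (\sum_j Q j * homogenize (F j)); split; first by exists Q.
  apply: rpred_sum => j _; have le_Dj := le_D j.
  rewrite -(@subnK (msize (F j)).-1 D); last by lia.
  apply: dhomogM; first by apply: homogenize_at_homog; lia.
  by rewrite homogenizeE; apply: homogenize_at_homog; lia.
rewrite dehomogenize_sum; apply: eq_bigr => j _.
by rewrite dehomogenizeM homogenizeE !homogenize_atK.
Qed.

End HomogenizedIdeal.

Lemma is_LM_dehomogenize (K : fieldType) (v : K -> int) n (r : 'I_n -> rat)
    (le : rel 'X_{1..n}) (h : {mpoly K[n.+1]}) d B :
  h \is d.-homog -> is_LM (tlt_r0m v r le) (ser_of h) B ->
  is_LM (tlt_rm v r le) (ser_of (dehomogenize h)) (mproj B).
Proof.
move=> hom_h [hB max_B].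
have Bh : B \in msupp h by rewrite mcoeff_msupp.
have [dB hmon_B] := msupp_homog_hmon hom_h Bh.
rewrite /ser_of; split; first by rewrite (mcoeff_dehomogenize _ hom_h) hmon_B.
move=> b; rewrite !(mcoeff_dehomogenize _ hom_h) hmon_B => hb b_ne.
have b'_ne : hmon b (d - mdeg b) <> B by move=> e; apply: b_ne; rewrite -e mproj_hmon.
have b'h : hmon b (d - mdeg b) \in msupp h by rewrite mcoeff_msupp.
have [db _] := msupp_homog_hmon hom_h b'h.
by have := tlt_r0m_mdeg (etrans db (esym dB)) (max_B _ hb b'_ne); rewrite mproj_hmon.
Qed.

Theorem mainTheorem6 (K : fieldType) (v : K -> int) (Hv : is_complete_dvf v)
    (n s : nat) (F : 'I_s -> {mpoly K[n]}) (r : 'I_n -> rat)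
    (le : rel 'X_{1..n}) (Hle : monomial_order le)
    (k : nat) (h : 'I_k -> {mpoly K[n.+1]}) :
  (forall i, poly_ideal (fun j => homogenize (F j)) (h i)) ->
  (forall i, exists d, h i \is d.-homog) ->
  tate_GB (tlt_r0m v r le)
    (tate_ideal v (r0 r) (poly_ideal (fun j => homogenize (F j))))
    (fun i => ser_of (h i)) ->
  r_local_GB v r le (poly_ideal F) (fun i => dehomogenize (h i)).
Proof.
move=> Ih hom_h [_ GB]; have [Hdv _] := Hv.
have I_dh i := dehomogenize_poly_ideal (Ih i).
split=> //; split=> [i|f If f_neq0]; first exact: tate_ideal_ser.
have [a1 fa1] : exists a1, f a1 != 0.
  apply: NNPP => no_a1; apply: f_neq0; apply: functional_extensionality => a.
  by have [//|fa] := eqVneq (f a) 0; case: no_a1; exists a.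
have [p [Ip close_fp]] := tate_ideal_approx Hdv (valr v r (f a1) a1) If.
have [pa1 _] := ser_small_dval Hdv (ser_small_subC Hdv close_fp) fa1 (lexx _).
have p_neq0 : p != 0 by apply: contra_neq pa1 => ->; rewrite /ser_of mcoeff0.
have [a0 LM_p] := exists_LM_mpoly v r Hle p_neq0.
have LM_f := is_LM_close Hdv close_fp fa1 (lexx _) LM_p.
have [D [H [IH hom_H dH]]] := poly_ideal_homog_lift Ip.
have H_neq0 : ser_of H <> (fun _ => 0).
  by move/ser_of_eq0 => H0; move: p_neq0; rewrite -dH H0 /dehomogenize rmorph0 eqxx.
have [i [A [B [LM_H LM_hi BA]]]] := GB _ (tate_ideal_ser _ _ IH) H_neq0.
have [d hom_hi] := hom_h i.
exists i, a0, (mproj B); split => //; first exact: is_LM_dehomogenize hom_hi LM_hi.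
have := is_LM_dehomogenize hom_H LM_H; rewrite dH => /(is_LM_unique Hle LM_p) ->.
exact: lem_mproj.
Qed.
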